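(* Even for two teams and nonnegative-value players, there does not necessarily exist an allocation that is both balanced and individually stable.
   Context: Setting: teams $T=[n]$, players $P=\{p_1,\dots,p_m\}$. Each player $p$ has a complete, transitive weak preference $\succsim_p$ over $T$ (strict part $\succ_p$). Each team $i$ has an additive valuation $v_i:2^P\to\mathbb{R}$, $v_i(S)=\sum_{p\in S}v_i(p)$; nonnegative-value players means $v_i(p)\ge 0$ for all $i,p$. An allocation $A=(A_1,\dots,A_n)$ is an ordered partition of $P$ into $n$ (possibly empty) parts. $A$ is balanced if $\big||A_i|-|A_j|\big|\le1$ for all $i,j$. Given $A$, a deviation of a player $p\in A_i$ to another team $j$ (moving $p$ from $A_i$ to $A_j$) is a beneficial deviation if $j\succ_p i$, $v_i(A_i\setminus\{p\})\ge v_i(A_i)$ and $v_j(A_j\cup\{p\})\ge v_j(A_j)$. $A$ is individually stable if it admits no beneficial deviation. *)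

From mathcomp Require Import all_boot all_order all_algebra.
Set Implicit Arguments. Unset Strict Implicit. Unset Printing Implicit Defensive.
Import Order.TTheory GRing.Theory Num.Theory.
Local Open Scope ring_scope.

(* Teams are 'I_n, players are 'I_m.
   A player's preference is a boolean relation [pref i j] meaning i ≿_p j. *)
Definition complete_pref (n : nat) (pref : 'I_n -> 'I_n -> bool) : Prop :=
  forall i j, pref i j || pref j i.
Definition transitive_pref (n : nat) (pref : 'I_n -> 'I_n -> bool) : Prop :=
  forall i j k, pref i j -> pref j k -> pref i k.
Definition weak_order (n : nat) (pref : 'I_n -> 'I_n -> bool) : Prop :=
  complete_pref pref /\ transitive_pref pref.

Definition spref (n : nat) (pref : 'I_n -> 'I_n -> bool) (i j : 'I_n) : bool :=
  pref i j && ~~ pref j i.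

Definition valuation (R : numDomainType) (n m : nat)
  (v : 'I_n -> 'I_m -> R) (i : 'I_n) (S : {set 'I_m}) : R :=
  \sum_(p in S) v i p.

(* An allocation (ordered partition of players into n possibly empty parts)
   is represented by the map sending each player to its team. *)
Definition allocation (n m : nat) := {ffun 'I_m -> 'I_n}.

Definition part (n m : nat) (A : allocation n m) (i : 'I_n) : {set 'I_m} :=
  [set p | A p == i].

Definition balanced (n m : nat) (A : allocation n m) : Prop :=
  forall i j : 'I_n, (#|part A i| <= #|part A j| + 1)%N.

Definition beneficial_deviation (R : numDomainType) (n m : nat)
  (pref : 'I_m -> 'I_n -> 'I_n -> bool) (v : 'I_n -> 'I_m -> R)
  (A : allocation n m) (p : 'I_m) (j : 'I_n) : Prop :=
  [/\ spref (pref p) j (A p),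
      valuation v (A p) (part A (A p)) <= valuation v (A p) (part A (A p) :\ p)
    & valuation v j (part A j) <= valuation v j (p |: part A j)].

Definition individually_stable (R : numDomainType) (n m : nat)
  (pref : 'I_m -> 'I_n -> 'I_n -> bool) (v : 'I_n -> 'I_m -> R)
  (A : allocation n m) : Prop :=
  forall p j, ~ beneficial_deviation pref v A p j.

From mathcomp Require Import all_boot all_order all_algebra.
Import Order.TTheory GRing.Theory Num.Theory.
Local Open Scope ring_scope.

(* Two players who both strictly prefer team 0, valued 0 by every team.  With
   zero values no team objects to losing or gaining a player, so a deviation is
   beneficial exactly when the player prefers the target team.  Balance forces
   one of the two players into team 1, and that player deviates to team 0. *)

Lemma weak_order_leq (n : nat) : weak_order (fun i j : 'I_n => (i <= j)%N).
Proof. by split=> [i j | i j k]; [apply: leq_total | apply: leq_trans]. Qed.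

Lemma beneficial_deviation0 (R : numDomainType) (n m : nat)
    (pref : 'I_m -> 'I_n -> 'I_n -> bool) (A : allocation n m) p j :
  beneficial_deviation pref (fun _ _ => 0 : R) A p j <-> spref (pref p) j (A p).
Proof.
by split=> [[] // | pref_j]; split; rewrite // /valuation !big1.
Qed.

Lemma sum_card_part {n m : nat} (A : allocation n m) :
  (\sum_i #|part A i|)%N = m.
Proof.
rewrite -[RHS]card_ord -sum1_card (partition_big A predT) //=.
by apply: eq_bigr => i _; rewrite sum1dep_card /part cardsE.
Qed.

(* If some team were empty, balance would leave at most one player in each of
   the other [n - 1] teams. *)
Lemma balanced_part_neq0 {n m : nat} (A : allocation n m) (i : 'I_n) :
  balanced A -> (n <= m)%N -> part A i != set0.
Proof.
move=> balA le_nm; apply/negP => /eqP Ai0.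
have card_part_le j : (#|part A j| <= (j != i))%N.
  have := balA j i; rewrite Ai0 cards0 add0n.
  by case: eqP => [->|//]; rewrite Ai0 cards0.
have : (m <= \sum_(j : 'I_n) (j != i))%N.
  by rewrite -{1}(sum_card_part A); apply: leq_sum => j _; apply: card_part_le.
rewrite (bigD1 i) //= eqxx add0n (eq_bigr (fun=> 1%N)) => [|j /negbTE-> //].
rewrite sum1_card cardC1 card_ord => le_m_pred.
have := leq_trans le_nm le_m_pred.
by rewrite -ltnS prednK ?ltnn // (leq_ltn_trans _ (ltn_ord i)).
Qed.

Theorem proposition4 (R : realFieldType) :
  exists (m : nat) (pref : 'I_m -> 'I_2 -> 'I_2 -> bool) (v : 'I_2 -> 'I_m -> R),
    [/\ forall p, weak_order (pref p),
        forall i p, 0 <= v i p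
      & forall A : allocation 2 m,
          ~ (balanced A /\ individually_stable pref v A)].
Proof.
exists 2%N, (fun _ (i j : 'I_2) => (i <= j)%N), (fun _ _ => 0).
split=> [p | // | A [balA stableA]]; first exact: weak_order_leq.
have /set0Pn [p] := balanced_part_neq0 A 1 balA (leqnn 2).
rewrite inE => /eqP Ap1.
by apply: (stableA p 0); apply/beneficial_deviation0; rewrite Ap1.
Qed.
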